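(* Let $n$ be a positive integer and $k$ an integer with $1<k<n$ and $\gcd(k,n)=1$. If $n$ is odd, there is at most one quasigroup operation on $\{1,2,\dots,n\}$ that is idempotent and $k$-translatable with respect to the ordering $1,2,\dots,n$. If $n$ is even, there is no such quasigroup.
   Context: A groupoid on $\{1,\dots,n\}$ is $k$-translatable with respect to the ordering $1,\dots,n$ if $i\cdot j=(i-1)\cdot(j-k)$ for all $i\in\{2,\dots,n\}$, $j\in\{1,\dots,n\}$, where $j-k$ is taken modulo $n$ in $\{1,\dots,n\}$ (each Cayley-table row is the previous row with its last $k$ entries moved to the front). Idempotent means $x\cdot x=x$ for all $x$. *)

(* Elements 1..n of the paper are represented by 'I_n,
   element i of the paper being the ordinal with value i-1. *)
From mathcomp Require Import all_boot.
Set Implicit Arguments. Unset Strict Implicit. Unset Printing Implicit Defensive.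

Definition quasigroup (T : Type) (op : T -> T -> T) : Prop :=
  forall a b : T, (exists! x, op a x = b) /\ (exists! y, op y a = b).

Definition is_idempotent (T : Type) (op : T -> T -> T) : Prop :=
  forall x : T, op x x = x.

(* k-translatable w.r.t. the ordering 1,...,n:  i*j = (i-1)*(j-k)  for i in 2..n,
   j in 1..n, j-k taken mod n in 1..n.  In 0-based values: for i >= 1,
   op i j = op (i-1) ((j - k) mod n). *)
Definition translatable (n k : nat) (op : 'I_n -> 'I_n -> 'I_n) : Prop :=
  forall i j i' j' : 'I_n,
    0 < val i -> val i' = (val i).-1 -> val j' = (val j + n - k) %% n ->
    op i j = op i' j'.
Arguments translatable n k op : clear implicits.

From mathcomp Require Import all_boot.
Set Implicit Arguments. Unset Strict Implicit. Unset Printing Implicit Defensive.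

(* Iterating the translation rule down to row 0 gives
   x * y = 0 * (y - x k) (indices mod n, 0-based), so a translatable operation
   is determined by its row 0.  Idempotence then says 0 * (x (1 - k)) = x for
   every x: this prescribes row 0 completely when x |-> x (1 - k) is a
   permutation of Z/n, and is contradictory when it is not.  For n even the
   coprimality forces k odd, so 1 - k is even and x = 0, x = n/2 collide. *)

Lemma half_mul_even_mod (n m : nat) : ~~ odd n -> ~~ odd m -> n./2 * m = 0 %[mod n].
Proof.
move=> n_even m_even.
by rewrite -(even_halfK m_even) -doubleMr doubleMl (even_halfK n_even) modnMr mod0n.
Qed.

Section TranslatableOperations.

Variables (n k : nat).
Hypotheses (n_gt0 : 0 < n) (k_le_n : k <= n).

Definition ord_mod (m : nat) : 'I_n := Ordinal (ltn_pmod m n_gt0).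

Let row0 : 'I_n := Ordinal n_gt0.

Definition diag_col (i : 'I_n) : 'I_n := ord_mod (i + i * (n - k)).

Lemma translatable_row0 (op : 'I_n -> 'I_n -> 'I_n) :
  translatable n k op ->
  forall i j : 'I_n, op i j = op row0 (ord_mod (j + i * (n - k))).
Proof.
move=> op_tr [i lt_i_n]; elim: i lt_i_n => [|i IHi] lt_i_n j.
  by congr (op _ _); apply: val_inj; rewrite //= mul0n addn0 modn_small.
have lt_i_n' : i < n := ltnW lt_i_n.
rewrite (op_tr _ j (Ordinal lt_i_n') (ord_mod (j + n - k))) // IHi.
congr (op _ _); apply: val_inj => /=.
by rewrite modnDml mulSn addnA addnBA.
Qed.

Lemma diag_colK (op : 'I_n -> 'I_n -> 'I_n) :
  is_idempotent op -> translatable n k op -> cancel diag_col (op row0).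
Proof. by move=> op_id op_tr i; rewrite -(translatable_row0 op_tr) op_id. Qed.

Lemma diag_col_inj (op : 'I_n -> 'I_n -> 'I_n) :
  is_idempotent op -> translatable n k op -> injective diag_col.
Proof. by move=> op_id op_tr; exact: can_inj (diag_colK op_id op_tr). Qed.

Lemma idempotent_translatable_unique (op1 op2 : 'I_n -> 'I_n -> 'I_n) :
  is_idempotent op1 -> translatable n k op1 ->
  is_idempotent op2 -> translatable n k op2 -> op1 =2 op2.
Proof.
move=> op1_id op1_tr op2_id op2_tr x y.
rewrite (translatable_row0 op1_tr) (translatable_row0 op2_tr).
have /codomP[i ->] := injF_onto (diag_col_inj op1_id op1_tr) (ord_mod (y + x * (n - k))).
by rewrite !diag_colK.
Qed.

Lemma diag_col_not_inj : ~~ odd n -> coprime k n -> ~ injective diag_col.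
Proof.
move=> n_even co_kn diag_inj.
have k_odd : odd k by rewrite -coprimen2 (coprime_dvdr _ co_kn) ?dvdn2.
have half_gt0 : 0 < n./2 by rewrite -double_gt0 (even_halfK n_even).
have lt_half_n : n./2 < n by rewrite -divn2 ltn_Pdiv.
suff /diag_inj/(congr1 val)/= half0 : diag_col (Ordinal lt_half_n) = diag_col row0.
  by rewrite half0 in half_gt0.
apply: val_inj; rewrite /= mul0n addnC -mulnSr.
by rewrite half_mul_even_mod //= oddB // (negbTE n_even) k_odd.
Qed.

End TranslatableOperations.

Theorem theorem8p9 (n k : nat) :
  0 < n -> 1 < k -> k < n -> coprime k n ->
  (odd n ->
     forall op1 op2 : 'I_n -> 'I_n -> 'I_n,
       quasigroup op1 -> is_idempotent op1 -> translatable n k op1 ->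
       quasigroup op2 -> is_idempotent op2 -> translatable n k op2 ->
       forall x y, op1 x y = op2 x y) /\
  (~~ odd n ->
     forall op : 'I_n -> 'I_n -> 'I_n,
       ~ (quasigroup op /\ is_idempotent op /\ translatable n k op)).
Proof.
move=> n_gt0 _ /ltnW k_le_n co_kn; split.
  move=> _ op1 op2 _ op1_id op1_tr _ op2_id op2_tr.
  exact: (idempotent_translatable_unique n_gt0 k_le_n).
move=> n_even op [_ [op_id op_tr]].
exact: (diag_col_not_inj k_le_n n_even co_kn (diag_col_inj k_le_n op_id op_tr)).
Qed.
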